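(* (1) If $\mathrm{NF}_{\mathrm{fin}}(G_0,G_1,G_2,G_3)$ holds and $\mathbf{x}$ is an amalgamation try with $G_{\mathbf{x},0} = G_0$, $G_1 \subseteq G_{\mathbf{x},1}$, $G_2 \subseteq G_{\mathbf{x},2}$, then there is at most one homomorphism $\mathbf{f} : G_3 \to G_{\mathbf{x}}$ with $\mathbf{f}\restriction G_\ell = \mathbf{j}_{\mathbf{x},\ell}\restriction G_\ell$ for $\ell = 1,2$. (2) If $\mathrm{NF}_{\mathrm{fin}}(G_0,G_1,G_2,G_3)$ then $G_1 \cap G_2 = G_0$. (3) If $G_0 \subseteq G_\ell$ are finite groups for $\ell = 1,2$, then there are groups $H_0,H_1,H_2,H_3$ and maps $f_0,f_1,f_2$ such that $\mathrm{NF}_{\mathrm{fin}}(H_0,H_1,H_2,H_3)$, $f_\ell$ is an isomorphism from $G_\ell$ onto $H_\ell$ for $\ell = 0,1,2$, and $f_0 \subseteq f_1$, $f_0 \subseteq f_2$.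
   Context: A group is locally finite if every finitely generated subgroup is finite. An amalgamation try is $\mathbf{x} = (G_{\mathbf{x},0},G_{\mathbf{x},1},G_{\mathbf{x},2},\mathbf{I}_{\mathbf{x},1},\mathbf{I}_{\mathbf{x},2})$ where $G_{\mathbf{x},1},G_{\mathbf{x},2}$ are locally finite groups with common subgroup $G_{\mathbf{x},0}$, $\mathbf{I}_{\mathbf{x},\ell}$ is a set of representatives (without repetition) of the left cosets of $G_{\mathbf{x},0}$ in $G_{\mathbf{x},\ell}$, and $e \in \mathbf{I}_{\mathbf{x},1}\cap\mathbf{I}_{\mathbf{x},2}$. With $\mathcal{U}_{\mathbf{x}} = \{(g_0,g_1,g_2): g_0 \in G_{\mathbf{x},0}, g_\ell \in \mathbf{I}_{\mathbf{x},\ell}\}$, for $g \in G_{\mathbf{x},1}$ the permutation $\mathbf{j}_{\mathbf{x},1}(g)$ maps $(g_0,g_1,g_2)$ to $(g_0',g_1',g_2)$ where $(g_1',g_0') \in \mathbf{I}_{\mathbf{x},1}\times G_{\mathbf{x},0}$ is unique with $g_1'g_0' = g_1g_0g$; symmetrically $\mathbf{j}_{\mathbf{x},2}(g)$ for $g \in G_{\mathbf{x},2}$ maps $(g_0,g_1,g_2)$ to $(g_0',g_1,g_2')$ with $g_2'g_0' = g_2g_0g$. Permutations act on the right ($f_1f_2$ is $u \mapsto f_2(f_1(u))$) and $G_{\mathbf{x}}$ is the permutation group generated by $\mathbf{j}_{\mathbf{x},1}(G_{\mathbf{x},1}) \cup \mathbf{j}_{\mathbf{x},2}(G_{\mathbf{x},2})$.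 $\mathrm{NF}_{\mathrm{fin}}(G_0,G_1,G_2,G_3)$ means: $G_0, G_1, G_2$ are finite groups, $G_3$ is a locally finite group, $G_0 \subseteq G_\ell \subseteq G_3$ for $\ell=1,2$; $G_3$ is generated by $G_1 \cup G_2$; for every amalgamation try $\mathbf{x}$ with $G_{\mathbf{x},0} = G_0$, $G_1 \subseteq G_{\mathbf{x},1}$, $G_2 \subseteq G_{\mathbf{x},2}$ there is a homomorphism $\mathbf{f}: G_3 \to G_{\mathbf{x}}$ with $\mathbf{f}\restriction G_\ell = \mathbf{j}_{\mathbf{x},\ell}\restriction G_\ell$ for $\ell = 1,2$; and for every $a \in G_3\setminus\{e\}$ there are such $\mathbf{x},\mathbf{f}$ with $\mathbf{f}(a) \ne e$. *)

From Stdlib Require Import List ClassicalEpsilon.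
Set Implicit Arguments.
Unset Strict Implicit.

Record group := Group {
  gcar :> Type;
  gmul : gcar -> gcar -> gcar;
  gone : gcar;
  ginv : gcar -> gcar;
  gmulA : forall x y z, gmul x (gmul y z) = gmul (gmul x y) z;
  gmul1l : forall x, gmul gone x = x;
  gmulVl : forall x, gmul (ginv x) x = gone }.

Arguments gmul {g}.
Arguments gone {g}.
Arguments ginv {g}.

Inductive generated (G : group) (A : G -> Prop) : G -> Prop :=
| gen_base x : A x -> generated A x
| gen_one : generated A gone
| gen_mul x y : generated A x -> generated A y -> generated A (gmul x y)
| gen_inv x : generated A x -> generated A (ginv x).

Definition finite_set (T : Type) (A : T -> Prop) : Prop :=
  exists l : list T, forall x, A x -> In x l.

Definition is_subgroup (G : group) (A : G -> Prop) : Prop :=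
  A gone /\ (forall x y, A x -> A y -> A (gmul x y)) /\
  (forall x, A x -> A (ginv x)).

Definition locally_finite (G : group) : Prop :=
  forall l : list G, finite_set (generated (fun x => In x l)).

Definition finite_group (G : group) : Prop := finite_set (fun _ : G => True).

Definition hom_on (G H : group) (A : G -> Prop) (f : G -> H) : Prop :=
  forall x y, A x -> A y -> f (gmul x y) = gmul (f x) (f y).

Definition inj_on (G H : Type) (A : G -> Prop) (f : G -> H) : Prop :=
  forall x y, A x -> A y -> f x = f y -> x = y.

Definition group_hom (G H : group) (f : G -> H) : Prop :=
  forall x y, f (gmul x y) = gmul (f x) (f y).

Definition iso_onto (G H : group) (f : G -> H) (A : H -> Prop) : Prop :=
  group_hom f /\ (forall x y, f x = f y -> x = y) /\
  (forall x, A (f x)) /\ (forall y, A y -> exists x, f x = y).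

Definition coset_reps (X : group) (K I : X -> Prop) : Prop :=
  forall y : X, exists i, (I i /\ exists k, K k /\ y = gmul i k) /\
    forall i', I i' -> (exists k, K k /\ y = gmul i' k) -> i' = i.

(** The inclusions
    G_l ⊆ G_{x,l} are given by embeddings te1, te2 (restricted to G1, G2);
    the common subgroup G_{x,0} = G0 sits in X1 as te1(G0) and in X2 as
    te2(G0). *)
Record try (G3 : group) := Try {
  tX1 : group;
  tX2 : group;
  te1 : G3 -> tX1;
  te2 : G3 -> tX2;
  tI1 : tX1 -> Prop;
  tI2 : tX2 -> Prop }.

Arguments tX1 {G3} t.
Arguments tX2 {G3} t.
Arguments te1 {G3} t _.
Arguments te2 {G3} t _.
Arguments tI1 {G3} t _.
Arguments tI2 {G3} t _.

Definition is_try (G3 : group) (G0 G1 G2 : G3 -> Prop) (x : try G3) : Prop :=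
  locally_finite (tX1 x) /\ locally_finite (tX2 x) /\
  hom_on G1 (te1 x) /\ inj_on G1 (te1 x) /\
  hom_on G2 (te2 x) /\ inj_on G2 (te2 x) /\
  coset_reps (fun y => exists g0, G0 g0 /\ y = te1 x g0) (tI1 x) /\
  coset_reps (fun y => exists g0, G0 g0 /\ y = te2 x g0) (tI2 x) /\
  tI1 x gone /\ tI2 x gone.

Arguments is_try {G3} G0 G1 G2 x.

(** Carrier type containing U_x = { (g0,g1,g2) } ; u = ((g0,g1),g2). *)
Definition tU (G3 : group) (x : try G3) : Type := (G3 * tX1 x * tX2 x)%type.

Arguments tU {G3} x.

Definition inU (G3 : group) (G0 : G3 -> Prop) (x : try G3) (u : tU x) : Prop :=
  G0 (fst (fst u)) /\ tI1 x (snd (fst u)) /\ tI2 x (snd u).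

Arguments inU {G3} G0 x u.

Definition j1 (G3 : group) (G0 : G3 -> Prop) (x : try G3) (g : tX1 x)
  (u : tU x) : tU x :=
  epsilon (inhabits u) (fun v : tU x =>
    (snd v) = (snd u) /\ G0 (fst (fst v)) /\ tI1 x (snd (fst v)) /\
    gmul (snd (fst v)) (te1 x (fst (fst v))) = gmul (gmul (snd (fst u)) (te1 x (fst (fst u)))) g).

Arguments j1 {G3} G0 x g u.

Definition j2 (G3 : group) (G0 : G3 -> Prop) (x : try G3) (g : tX2 x)
  (u : tU x) : tU x :=
  epsilon (inhabits u) (fun v : tU x =>
    (snd (fst v)) = (snd (fst u)) /\ G0 (fst (fst v)) /\ tI2 x (snd v) /\
    gmul (snd v) (te2 x (fst (fst v))) = gmul (gmul (snd u) (te2 x (fst (fst u)))) g).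

Arguments j2 {G3} G0 x g u.

(** G_x: the permutation group of U_x generated by the j's.  Permutations
    are identified by their restriction to U_x; composition acts on the
    right (p q = u |-> q (p u)). *)
Inductive perm_gen (G3 : group) (G0 : G3 -> Prop) (x : try G3)
  : (tU x -> tU x) -> Prop :=
| pg_j1 g : @perm_gen G3 G0 x (j1 G0 x g)
| pg_j2 g : @perm_gen G3 G0 x (j2 G0 x g)
| pg_id : @perm_gen G3 G0 x (fun u => u)
| pg_comp p q : @perm_gen G3 G0 x p -> @perm_gen G3 G0 x q ->
    @perm_gen G3 G0 x (fun u => q (p u))
| pg_inv p q : @perm_gen G3 G0 x p ->
    (forall u, inU G0 x u -> inU G0 x (q u) /\ q (p u) = u /\ p (q u) = u) ->
    @perm_gen G3 G0 x q
| pg_ext p q : @perm_gen G3 G0 x p -> (forall u, inU G0 x u -> q u = p u) ->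
    @perm_gen G3 G0 x q.

Arguments perm_gen {G3} G0 x _.

Definition amalg_hom (G3 : group) (G0 G1 G2 : G3 -> Prop) (x : try G3)
  (f : G3 -> tU x -> tU x) : Prop :=
  (forall a, perm_gen G0 x (f a)) /\
  (forall a b u, inU G0 x u -> f (gmul a b) u = f b (f a u)) /\
  (forall a u, G1 a -> inU G0 x u -> f a u = j1 G0 x (te1 x a) u) /\
  (forall a u, G2 a -> inU G0 x u -> f a u = j2 G0 x (te2 x a) u).

Arguments amalg_hom {G3} G0 G1 G2 x f.

Definition NF_fin (G3 : group) (G0 G1 G2 : G3 -> Prop) : Prop :=
  is_subgroup G0 /\ is_subgroup G1 /\ is_subgroup G2 /\
  finite_set G0 /\ finite_set G1 /\ finite_set G2 /\
  locally_finite G3 /\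
  (forall a, G0 a -> G1 a) /\ (forall a, G0 a -> G2 a) /\
  (forall a, generated (fun y => G1 y \/ G2 y) a) /\
  (forall x : try G3, is_try G0 G1 G2 x ->
     exists f, amalg_hom G0 G1 G2 x f) /\
  (forall a : G3, a <> gone ->
     exists x : try G3, is_try G0 G1 G2 x /\
       exists f, amalg_hom G0 G1 G2 x f /\
         exists u, inU G0 x u /\ f a u <> u).

(* (1) An amalgamation homomorphism is determined on G1 ∪ G2, which generates G3.
   (2) In the try with G_{x,1} = G_{x,2} = G3 and embeddings the identity, j_{x,1}(a)
   and j_{x,2}(a) can only agree at (1, 1, 1) if a ∈ G0.
   (3) Take H3 to be the words in G1 ⊔ G2, two words being identified when they act in
   the same way on U_x for every try x over G0 with G_{x,l} = G_l itself.  There are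
   finitely many such tries, so H3 is finite; it is generated by G1 ∪ G2 and separated
   by these tries by construction.  For an arbitrary try x over H3, the G_x-orbit of
   (h, a1, a2) is a copy of an orbit in the try over G0 whose coset representatives
   are {t | a_l t ∈ I_{x,l}}, so words identified in H3 act equally on U_x. *)

From Stdlib Require Import List ClassicalEpsilon FunctionalExtensionality
  PropExtensionality ProofIrrelevance Classical RelationClasses.
Import ListNotations.
Set Implicit Arguments.
Unset Strict Implicit.

Local Infix "**" := gmul (at level 40, left associativity).

Section GroupLaws.
Variable G : group.
Implicit Types x y z : G.

Lemma gmul_cancel_l z x y : z ** x = z ** y -> x = y.
Proof.
  intro E. rewrite <- (gmul1l x), <- (gmul1l y), <- (gmulVl z), <- !gmulA, E.
  reflexivity.
Qed.

Lemma gidem_one y : y ** y = y -> y = gone.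
Proof.
  intro E. apply (f_equal (gmul (ginv y))) in E.
  rewrite gmulA, gmulVl, gmul1l in E. exact E.
Qed.

Lemma gmulVr x : x ** ginv x = gone.
Proof.
  apply gidem_one.
  rewrite gmulA, <- (gmulA x (ginv x) x), gmulVl, <- (gmulA x gone), gmul1l.
  reflexivity.
Qed.

Lemma gmul1r x : x ** gone = x.
Proof. rewrite <- (gmulVl x), gmulA, gmulVr, gmul1l. reflexivity. Qed.

Lemma gmulKV x y : x ** y ** ginv y = x.
Proof. rewrite <- gmulA, gmulVr, gmul1r. reflexivity. Qed.

Lemma gmulVK x y : x ** ginv y ** y = x.
Proof. rewrite <- gmulA, gmulVl, gmul1r. reflexivity. Qed.
End GroupLaws.

Lemma hom_on_one (G H : group) (A : G -> Prop) (f : G -> H) :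
  hom_on A f -> A gone -> f gone = gone.
Proof.
  intros Hf A1. apply gidem_one. rewrite <- Hf by exact A1. rewrite gmul1l. reflexivity.
Qed.

Lemma group_hom_one (G H : group) (f : G -> H) : group_hom f -> f gone = gone.
Proof. intro Hf. apply (@hom_on_one _ _ (fun _ => True)); [intros x y _ _; apply Hf | exact I]. Qed.

Lemma group_hom_inv (G H : group) (f : G -> H) x : group_hom f -> f (ginv x) = ginv (f x).
Proof.
  intro Hf. apply (@gmul_cancel_l _ (f x)).
  rewrite <- Hf, !gmulVr. apply group_hom_one, Hf.
Qed.

Definition image_of (T X : Type) (A : T -> Prop) (e : T -> X) (y : X) : Prop :=
  exists g, A g /\ y = e g.

Lemma image_of_comp (T U V : Type) (A : T -> Prop) (f : T -> U) (g : U -> V) y :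
  image_of (image_of A f) g y <-> image_of A (fun a => g (f a)) y.
Proof.
  split.
  - intros [b [[a [Aa ->]] ->]]. exists a. auto.
  - intros [a [Aa ->]]. exists (f a). split; [exists a; auto | reflexivity].
Qed.

Lemma image_of_ext (T U : Type) (A : T -> Prop) (f g : T -> U) y :
  (forall a, A a -> f a = g a) -> image_of A f y <-> image_of A g y.
Proof.
  intro E. split; intros [a [Aa ->]]; exists a; split; auto. symmetry; auto.
Qed.

Lemma image_subgroup (G H : group) (A : G -> Prop) (f : G -> H) :
  is_subgroup A -> group_hom f -> is_subgroup (image_of A f).
Proof.
  intros [A1 [AM AV]] Hf. split; [| split].
  - exists gone. split; [exact A1 | symmetry; apply group_hom_one, Hf].
  - intros y z [g [Ag ->]] [h [Ah ->]]. exists (g ** h). split; [auto | symmetry; apply Hf].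
  - intros y [g [Ag ->]]. exists (ginv g). split; [auto | symmetry; apply group_hom_inv, Hf].
Qed.

Lemma iso_onto_image (G H : group) (f : G -> H) :
  group_hom f -> (forall a b, f a = f b -> a = b) -> iso_onto f (image_of (fun _ => True) f).
Proof.
  intros Hf If. split; [exact Hf | split; [exact If | split]].
  - intro g. exists g. auto.
  - intros y [g [_ ->]]. exists g. reflexivity.
Qed.
Lemma finite_image (A B : Type) (P : A -> Prop) (f : A -> B) :
  finite_set P -> finite_set (image_of P f).
Proof. intros [l Hl]. exists (map f l). intros y [a [Pa ->]]. apply in_map, Hl, Pa. Qed.

Lemma coset_reps_ext (X : group) (K K' I : X -> Prop) :
  (forall y, K y <-> K' y) -> coset_reps K I -> coset_reps K' I.
Proof.
  intros E H. replace K' with K; [exact H |].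
  apply functional_extensionality; intro y; apply propositional_extensionality, E.
Qed.

Section CosetRepsExist.
Variables (X : group) (K : X -> Prop).
Hypothesis HK : is_subgroup K.

Definition same_coset (y z : X) : Prop := exists k, K k /\ y = z ** k.

Lemma same_coset_refl y : same_coset y y.
Proof. exists gone. split; [apply HK | symmetry; apply gmul1r]. Qed.

Lemma same_coset_sym y z : same_coset y z -> same_coset z y.
Proof.
  intros [k [Kk ->]]. exists (ginv k). split; [apply HK, Kk | symmetry; apply gmulKV].
Qed.

Lemma same_coset_trans y z w : same_coset y z -> same_coset z w -> same_coset y w.
Proof.
  intros [k [Kk ->]] [k' [Kk' ->]]. exists (k' ** k).
  split; [apply HK; assumption | symmetry; apply gmulA].
Qed.

(* Forcing [gone] to represent its own coset makes [gone] a representative. *)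
Definition coset_rep (y : X) : X :=
  epsilon (inhabits gone) (fun z => same_coset y z /\ (same_coset z gone -> z = gone)).

Lemma coset_rep_spec y :
  same_coset y (coset_rep y) /\ (same_coset (coset_rep y) gone -> coset_rep y = gone).
Proof.
  unfold coset_rep.
  apply (epsilon_spec (inhabits gone)
    (fun z => same_coset y z /\ (same_coset z gone -> z = gone))).
  destruct (classic (same_coset y gone)) as [Hy | Hy].
  - exists gone. split; [exact Hy | reflexivity].
  - exists y. split; [apply same_coset_refl | intro; contradiction].
Qed.

Lemma coset_rep_eq y z : same_coset y z -> coset_rep y = coset_rep z.
Proof.
  intro Hyz. unfold coset_rep. f_equal.
  apply functional_extensionality; intro w; apply propositional_extensionality.
  split; intros [H1 H2]; split; try exact H2.
  - apply (same_coset_trans (same_coset_sym Hyz) H1).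
  - apply (same_coset_trans Hyz H1).
Qed.

Lemma coset_reps_exist : exists I, coset_reps K I /\ I gone.
Proof.
  exists (fun i => coset_rep i = i). split.
  - intro y. exists (coset_rep y). split; [split |].
    + apply coset_rep_eq, same_coset_sym, coset_rep_spec.
    + apply coset_rep_spec.
    + intros i' Hi' Hy. rewrite <- Hi'. symmetry. apply coset_rep_eq, Hy.
  - apply coset_rep_spec, same_coset_sym, coset_rep_spec.
Qed.
End CosetRepsExist.

Section CosetDecomposition.
Variables (T : Type) (X : group) (A : T -> Prop) (e : T -> X) (I : X -> Prop).
Hypothesis HI : coset_reps (image_of A e) I.

Lemma coset_decomp y : exists i g, I i /\ A g /\ y = i ** e g.
Proof.
  destruct (HI y) as [i [[Ii [k [[g [Ag ->]] Hy]]] _]]. exists i, g. auto.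
Qed.

Lemma coset_decomp_unique i g i' g' : inj_on A e ->
  I i -> A g -> I i' -> A g' -> i ** e g = i' ** e g' -> i = i' /\ g = g'.
Proof.
  intros He Ii Ag Ii' Ag' E.
  destruct (HI (i ** e g)) as [j [_ Uj]].
  assert (Ei : i = i') by (rewrite (Uj i), (Uj i'); [reflexivity | exact Ii' |
    exists (e g'); split; [exists g'; auto | exact E] | exact Ii |
    exists (e g); split; [exists g; auto | reflexivity]]).
  subst i'. split; [reflexivity |].
  apply He; [exact Ag | exact Ag' | exact (gmul_cancel_l E)].
Qed.

End CosetDecomposition.

Lemma coset_reps_pullback (G X : group) (f : G -> X) (K : G -> Prop) (I : X -> Prop)
  (a : X) : group_hom f -> (forall g h, f g = f h -> g = h) ->
  coset_reps (image_of K f) I -> coset_reps K (fun t => I (a ** f t)).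
Proof.
  intros Hf If HI y.
  destruct (HI (a ** f y)) as [i [[Ii [k0 [[k [Kk ->]] Ey]]] Ui]].
  assert (Et : a ** f (y ** ginv k) = i).
  { rewrite Hf, group_hom_inv by exact Hf. rewrite gmulA, Ey, gmulKV. reflexivity. }
  exists (y ** ginv k). split; [split |].
  - rewrite Et. exact Ii.
  - exists k. split; [exact Kk | symmetry; apply gmulVK].
  - intros t' It' [k' [Kk' ->]]. apply If, (@gmul_cancel_l _ a). rewrite Et.
    apply Ui; [exact It' |]. exists (f k'). split; [exists k'; auto |].
    rewrite Hf, gmulA. reflexivity.
Qed.

(** * The permutations [j_{x,l}] *)

Section CosetActions.
Variables (G3 : group) (G0 : G3 -> Prop) (x : try G3).
Hypothesis C1 : coset_reps (image_of G0 (te1 x)) (tI1 x).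
Hypothesis C2 : coset_reps (image_of G0 (te2 x)) (tI2 x).

(* [u = (g0, g1, g2)] encodes [g1 g0 ∈ G_{x,1}] and [g2 g0 ∈ G_{x,2}]: [j1 g] multiplies
   the first on the right by [g] keeping [g2], and dually for [j2]. *)
Definition pos1 (u : tU x) : tX1 x := snd (fst u) ** te1 x (fst (fst u)).
Definition pos2 (u : tU x) : tX2 x := snd u ** te2 x (fst (fst u)).

Lemma j1_spec g u : inU G0 x u ->
  inU G0 x (j1 G0 x g u) /\ snd (j1 G0 x g u) = snd u /\
  pos1 (j1 G0 x g u) = pos1 u ** g.
Proof.
  intros [_ [_ Iu]].
  assert (S : snd (j1 G0 x g u) = snd u /\ G0 (fst (fst (j1 G0 x g u))) /\
    tI1 x (snd (fst (j1 G0 x g u))) /\ pos1 (j1 G0 x g u) = pos1 u ** g).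
  { unfold j1. apply epsilon_spec.
    destruct (coset_decomp C1 (pos1 u ** g)) as [i [g0 [Ii [Ag0 E]]]].
    exists (g0, i, snd u). simpl. auto. }
  destruct S as [E [A0 [A1 P]]]. unfold inU. rewrite E. auto.
Qed.

Lemma j2_spec g u : inU G0 x u ->
  inU G0 x (j2 G0 x g u) /\ snd (fst (j2 G0 x g u)) = snd (fst u) /\
  pos2 (j2 G0 x g u) = pos2 u ** g.
Proof.
  intros [_ [Iu _]].
  assert (S : snd (fst (j2 G0 x g u)) = snd (fst u) /\ G0 (fst (fst (j2 G0 x g u))) /\
    tI2 x (snd (j2 G0 x g u)) /\ pos2 (j2 G0 x g u) = pos2 u ** g).
  { unfold j2. apply epsilon_spec.
    destruct (coset_decomp C2 (pos2 u ** g)) as [i [g0 [Ii [Ag0 E]]]].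
    exists (g0, snd (fst u), i). simpl. auto. }
  destruct S as [E [A0 [A2 P]]]. unfold inU. rewrite E. auto.
Qed.

Lemma perm_gen_in p : perm_gen G0 x p -> forall u, inU G0 x u -> inU G0 x (p u).
Proof.
  induction 1 as [g | g | | p q _ IHp _ IHq | p q _ _ Hq | p q _ IHp Eq]; intros u Hu.
  - apply j1_spec, Hu.
  - apply j2_spec, Hu.
  - exact Hu.
  - apply IHq, IHp, Hu.
  - apply Hq, Hu.
  - rewrite Eq by exact Hu. apply IHp, Hu.
Qed.

Hypothesis Inj1 : inj_on G0 (te1 x).
Hypothesis Inj2 : inj_on G0 (te2 x).

Lemma j1_char g u v : inU G0 x u -> inU G0 x v -> snd v = snd u ->
  pos1 v = pos1 u ** g -> j1 G0 x g u = v.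
Proof.
  intros Hu [V0 [V1 V2]] Ev Pv. destruct (j1_spec g Hu) as [[W0 [W1 W2]] [Ew Pw]].
  destruct (coset_decomp_unique C1 Inj1 W1 W0 V1 V0) as [E1 E0].
  { unfold pos1 in Pv, Pw. rewrite Pw, Pv. reflexivity. }
  destruct (j1 G0 x g u) as [[w0 w1] w2], v as [[v0 v1] v2].
  simpl in *. subst. reflexivity.
Qed.

Lemma j2_char g u v : inU G0 x u -> inU G0 x v -> snd (fst v) = snd (fst u) ->
  pos2 v = pos2 u ** g -> j2 G0 x g u = v.
Proof.
  intros Hu [V0 [V1 V2]] Ev Pv. destruct (j2_spec g Hu) as [[W0 [W1 W2]] [Ew Pw]].
  destruct (coset_decomp_unique C2 Inj2 W2 W0 V2 V0) as [E2 E0].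
  { unfold pos2 in Pv, Pw. rewrite Pw, Pv. reflexivity. }
  destruct (j2 G0 x g u) as [[w0 w1] w2], v as [[v0 v1] v2].
  simpl in *. subst. reflexivity.
Qed.

Lemma j1_one u : inU G0 x u -> j1 G0 x gone u = u.
Proof. intro Hu. apply j1_char; auto. rewrite gmul1r. reflexivity. Qed.

Lemma j2_one u : inU G0 x u -> j2 G0 x gone u = u.
Proof. intro Hu. apply j2_char; auto. rewrite gmul1r. reflexivity. Qed.

Lemma j1_mul g h u : inU G0 x u -> j1 G0 x h (j1 G0 x g u) = j1 G0 x (g ** h) u.
Proof.
  intro Hu. destruct (j1_spec g Hu) as [Hv [Ev Pv]].
  destruct (j1_spec h Hv) as [Hw [Ew Pw]].
  symmetry. apply j1_char; auto.
  - rewrite Ew. exact Ev.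
  - rewrite Pw, Pv. symmetry. apply gmulA.
Qed.

Lemma j2_mul g h u : inU G0 x u -> j2 G0 x h (j2 G0 x g u) = j2 G0 x (g ** h) u.
Proof.
  intro Hu. destruct (j2_spec g Hu) as [Hv [Ev Pv]].
  destruct (j2_spec h Hv) as [Hw [Ew Pw]].
  symmetry. apply j2_char; auto.
  - rewrite Ew. exact Ev.
  - rewrite Pw, Pv. symmetry. apply gmulA.
Qed.
End CosetActions.

(** * Uniqueness of the homomorphism and [G1 ∩ G2 = G0] *)

Section AmalgHom.
Variables (G3 : group) (G0 G1 G2 : G3 -> Prop) (x : try G3).
Hypothesis Hx : is_try G0 G1 G2 x.
Hypothesis HG1 : is_subgroup G1.
Hypothesis G01 : forall a, G0 a -> G1 a.
Variable f : G3 -> tU x -> tU x.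
Hypothesis Hf : amalg_hom G0 G1 G2 x f.

Lemma amalg_hom_in a u : inU G0 x u -> inU G0 x (f a u).
Proof. apply perm_gen_in; apply Hx || apply Hf. Qed.

Lemma amalg_hom_one u : inU G0 x u -> f gone u = u.
Proof.
  intro Hu. destruct Hx as [_ [_ [Hh1 [Hi1 [_ [_ [C1 _]]]]]]].
  destruct Hf as [_ [_ [F1 _]]].
  rewrite F1, (hom_on_one Hh1) by (apply HG1 || exact Hu).
  apply (j1_one C1); [intros a b Ha Hb; apply Hi1; auto | exact Hu].
Qed.

Lemma amalg_hom_K a u : inU G0 x u -> f (ginv a) (f a u) = u.
Proof.
  intro Hu. rewrite <- (proj1 (proj2 Hf)) by exact Hu.
  rewrite gmulVr. apply amalg_hom_one, Hu.
Qed.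

Lemma amalg_hom_VK a u : inU G0 x u -> f a (f (ginv a) u) = u.
Proof.
  intro Hu. rewrite <- (proj1 (proj2 Hf)) by exact Hu.
  rewrite gmulVl. apply amalg_hom_one, Hu.
Qed.
End AmalgHom.

Lemma amalg_hom_unique (G3 : group) (G0 G1 G2 : G3 -> Prop) (x : try G3)
  (f f' : G3 -> tU x -> tU x) :
  is_try G0 G1 G2 x -> is_subgroup G1 -> (forall a, G0 a -> G1 a) ->
  (forall a, generated (fun y => G1 y \/ G2 y) a) ->
  amalg_hom G0 G1 G2 x f -> amalg_hom G0 G1 G2 x f' ->
  forall a u, inU G0 x u -> f a u = f' a u.
Proof.
  intros Hx HG1 G01 Gen Hf Hf' a.
  pose proof Hf as [_ [Mf [F1 F2]]]. pose proof Hf' as [_ [Mf' [F1' F2']]].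
  induction (Gen a) as [b [Hb | Hb] | | b c _ IHb _ IHc | b _ IHb]; intros u Hu.
  - rewrite F1, F1'; auto.
  - rewrite F2, F2'; auto.
  - rewrite !(amalg_hom_one Hx HG1 G01) by assumption. reflexivity.
  - rewrite Mf, Mf', IHb by exact Hu.
    apply IHc, (amalg_hom_in Hx Hf'), Hu.
  - set (v := f' (ginv b) u).
    assert (Hv : inU G0 x v) by apply (amalg_hom_in Hx Hf'), Hu.
    assert (Ev : f b v = u).
    { rewrite IHb by exact Hv. apply (amalg_hom_VK Hx HG1 G01 Hf'), Hu. }
    rewrite <- Ev. apply (amalg_hom_K Hx HG1 G01 Hf), Hv.
Qed.

Lemma NF_fin_inter (G3 : group) (G0 G1 G2 : G3 -> Prop) :
  NF_fin G0 G1 G2 -> forall a, G1 a -> G2 a -> G0 a.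
Proof.
  intros [S0 [_ [_ [_ [_ [_ [LF [_ [_ [_ [Univ _]]]]]]]]]]] a A1 A2.
  destruct (@coset_reps_exist G3 (image_of G0 (fun g => g))) as [I [HI I1]].
  { apply image_subgroup; [exact S0 | intros g h; reflexivity]. }
  set (x := @Try G3 G3 G3 (fun g => g) (fun g => g) I I).
  assert (Hx : is_try G0 G1 G2 x).
  { repeat split; auto; intros g h _ _; auto. }
  destruct (Univ x Hx) as [f [_ [_ [F1 F2]]]].
  set (u := (gone, gone, gone) : tU x).
  assert (Hu : inU G0 x u) by (repeat split; auto; apply S0).
  assert (E : j1 G0 x a u = j2 G0 x a u)
    by (transitivity (f a u); [symmetry; apply F1 | apply F2]; auto).
  destruct (@j1_spec G3 G0 x HI a u Hu) as [[B0 _] [B2 P1]].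
  destruct (@j2_spec G3 G0 x HI a u Hu) as [_ [B1 _]].
  rewrite <- E in B1. unfold pos1 in P1. simpl in *.
  rewrite B1, !gmul1l in P1. rewrite P1 in B0. exact B0.
Qed.

Definition inverse_of (A B : Type) (a0 : A) (f : A -> B) (b : B) : A :=
  epsilon (inhabits a0) (fun a => f a = b).

Lemma inverse_of_K (A B : Type) (a0 : A) (f : A -> B) a :
  (forall a a', f a = f a' -> a = a') -> inverse_of a0 f (f a) = a.
Proof.
  intro If. apply If. unfold inverse_of.
  apply (epsilon_spec (inhabits a0) (fun a' => f a' = f a)). exists a. reflexivity.
Qed.

Lemma finite_group_locally_finite (G : group) : finite_group G -> locally_finite G.
Proof. intros [l Hl] l'. exists l. auto. Qed.

Lemma finite_of_injection (C D : Type) (c0 : C) (f : C -> D) (P : D -> Prop) :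
  (forall c, P (f c)) -> (forall c c', f c = f c' -> c = c') ->
  finite_set P -> finite_set (fun _ : C => True).
Proof.
  intros Pf If [l Hl]. exists (map (inverse_of c0 f) l). intros c _.
  rewrite <- (inverse_of_K c0 c If). apply in_map, Hl, Pf.
Qed.

Fixpoint lists_of_length (B : Type) (n : nat) (L : list B) : list (list B) :=
  match n with
  | O => [[]]
  | S n' => flat_map (fun b => map (cons b) (lists_of_length n' L)) L
  end.

Lemma finite_lists (B : Type) (n : nat) (L : list B) :
  finite_set (fun s => length s = n /\ incl s L).
Proof.
  exists (lists_of_length n L). intros s [Hn Hs]. subst n. revert Hs.
  induction s as [| b s IH]; intro Hs; simpl; auto.
  apply in_flat_map. exists b. split; [apply Hs; simpl; auto |].
  apply in_map, IH. intros c Hc. apply Hs. simpl. auto.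
Qed.

Fixpoint sublists (T : Type) (l : list T) : list (list T) :=
  match l with
  | [] => [[]]
  | a :: l' => map (cons a) (sublists l') ++ sublists l'
  end.

Lemma filter_in_sublists (T : Type) (f : T -> bool) (l : list T) :
  In (filter f l) (sublists l).
Proof.
  induction l as [| a l IH]; simpl; auto.
  apply in_or_app. destruct (f a); [left; apply in_map | right]; exact IH.
Qed.

Lemma pred_as_sublist (T : Type) (l : list T) (J : T -> Prop) :
  (forall t, In t l) -> exists s, In s (sublists l) /\ J = (fun t => In t s).
Proof.
  intro Hl.
  exists (filter (fun t => if excluded_middle_informative (J t) then true else false) l).
  split; [apply filter_in_sublists |].
  apply functional_extensionality; intro t; apply propositional_extensionality.
  rewrite filter_In. destruct excluded_middle_informative; intuition; discriminate.
Qed.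

Section Quotient.
Local Unset Implicit Arguments.
Context {T : Type} (R : T -> T -> Prop) `{Equivalence T R}.

Definition quot : Type := {P : T -> Prop | exists t, P = R t}.
Definition cls (t : T) : quot := exist _ (R t) (ex_intro _ t eq_refl).
Definition repr (q : quot) : T :=
  proj1_sig (constructive_indefinite_description _ (proj2_sig q)).

Lemma quot_ext (q q' : quot) : proj1_sig q = proj1_sig q' -> q = q'.
Proof.
  destruct q as [P HP], q' as [P' HP']. simpl. intros <-. f_equal. apply proof_irrelevance.
Qed.

Lemma cls_eq t t' : R t t' -> cls t = cls t'.
Proof.
  intro E. apply quot_ext. simpl.
  apply functional_extensionality; intro s; apply propositional_extensionality.
  split; intro; [transitivity t | transitivity t']; auto; symmetry; auto.
Qed.

Lemma cls_inj t t' : cls t = cls t' -> R t t'.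
Proof.
  intro E. apply (f_equal (@proj1_sig _ _)) in E. simpl in E. rewrite E. reflexivity.
Qed.

Lemma cls_repr q : cls (repr q) = q.
Proof.
  apply quot_ext. unfold repr. destruct (constructive_indefinite_description _ _) as [t Et].
  simpl. symmetry. exact Et.
Qed.

Lemma repr_cls t : R (repr (cls t)) t.
Proof. apply cls_inj, cls_repr. Qed.
End Quotient.

(** * The amalgam of finite groups *)

Section WordAction.
Variables (A B : Type) (G3 : group) (G0 : G3 -> Prop) (x : try G3).
Variables (e1 : A -> tX1 x) (e2 : B -> tX2 x).

Definition letter_act (u : tU x) (l : A + B) : tU x :=
  match l with inl g => j1 G0 x (e1 g) u | inr g => j2 G0 x (e2 g) u end.

Definition word_act (w : list (A + B)) (u : tU x) : tU x := fold_left letter_act w u.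

Lemma word_act_app w w' u : word_act (w ++ w') u = word_act w' (word_act w u).
Proof. apply fold_left_app. Qed.

Lemma word_act_perm w : perm_gen G0 x (word_act w).
Proof.
  induction w as [| [g | g] w IH]; simpl.
  - apply pg_id.
  - exact (pg_comp (pg_j1 _ (e1 g)) IH).
  - exact (pg_comp (pg_j2 _ (e2 g)) IH).
Qed.

Lemma word_act_in w u :
  coset_reps (image_of G0 (te1 x)) (tI1 x) -> coset_reps (image_of G0 (te2 x)) (tI2 x) ->
  inU G0 x u -> inU G0 x (word_act w u).
Proof. intros C1 C2. apply (perm_gen_in C1 C2), word_act_perm. Qed.
End WordAction.

Section Amalgam.
Variables (G0 G1 G2 : group) (i1 : G0 -> G1) (i2 : G0 -> G2).
Hypothesis Hi1 : group_hom i1.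
Hypothesis Ii1 : forall a b, i1 a = i1 b -> a = b.
Hypothesis Hi2 : group_hom i2.
Hypothesis Ii2 : forall a b, i2 a = i2 b -> a = b.

Local Notation all0 := (fun _ : G0 => True).

Definition word : Type := list (G1 + G2).

Definition base_try (J1 : G1 -> Prop) (J2 : G2 -> Prop) : try G0 :=
  @Try G0 G1 G2 i1 i2 J1 J2.

Definition admissible (J1 : G1 -> Prop) (J2 : G2 -> Prop) : Prop :=
  coset_reps (image_of all0 i1) J1 /\ coset_reps (image_of all0 i2) J2 /\
  J1 gone /\ J2 gone.

Definition base_act J1 J2 (w : word) (u : tU (base_try J1 J2)) : tU (base_try J1 J2) :=
  @word_act G1 G2 G0 all0 (base_try J1 J2) (fun g => g) (fun g => g) w u.

Definition word_equiv (w w' : word) : Prop :=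
  forall J1 J2, admissible J1 J2 -> forall u, inU all0 (base_try J1 J2) u ->
    base_act w u = base_act w' u.

Lemma base_inj1 J1 J2 : inj_on all0 (te1 (base_try J1 J2)).
Proof. intros a b _ _. apply Ii1. Qed.

Lemma base_inj2 J1 J2 : inj_on all0 (te2 (base_try J1 J2)).
Proof. intros a b _ _. apply Ii2. Qed.

Lemma base_act_app J1 J2 w w' (u : tU (base_try J1 J2)) :
  base_act (w ++ w') u = base_act w' (base_act w u).
Proof. apply word_act_app. Qed.

Lemma admissible_reps1 J1 J2 : admissible J1 J2 ->
  coset_reps (image_of all0 (te1 (base_try J1 J2))) (tI1 (base_try J1 J2)).
Proof. intros [C1 _]. exact C1. Qed.

Lemma admissible_reps2 J1 J2 : admissible J1 J2 ->
  coset_reps (image_of all0 (te2 (base_try J1 J2))) (tI2 (base_try J1 J2)).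
Proof. intros [_ [C2 _]]. exact C2. Qed.

Lemma base_act_in J1 J2 w u : admissible J1 J2 ->
  inU all0 (base_try J1 J2) u -> inU all0 (base_try J1 J2) (base_act w u).
Proof.
  intro V. apply word_act_in; [apply admissible_reps1 | apply admissible_reps2]; exact V.
Qed.

Lemma admissible_exist : exists J1 J2, admissible J1 J2.
Proof.
  assert (S0 : is_subgroup all0) by (repeat split).
  destruct (coset_reps_exist (image_subgroup S0 Hi1)) as [J1 [C1 O1]].
  destruct (coset_reps_exist (image_subgroup S0 Hi2)) as [J2 [C2 O2]].
  exists J1, J2. repeat split; assumption.
Qed.

#[local] Instance word_equiv_equiv : Equivalence word_equiv.
Proof.
  split.
  - intros w J1 J2 _ u _. reflexivity.
  - intros w w' E J1 J2 V u Hu. symmetry. apply E; assumption.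
  - intros w w' w'' E E' J1 J2 V u Hu. rewrite (E J1 J2 V u Hu). apply E'; assumption.
Qed.

Lemma word_equiv_app w1 w1' w2 w2' :
  word_equiv w1 w1' -> word_equiv w2 w2' -> word_equiv (w1 ++ w2) (w1' ++ w2').
Proof.
  intros E1 E2 J1 J2 V u Hu. rewrite !base_act_app.
  rewrite (E1 J1 J2 V u Hu). apply E2, base_act_in; assumption.
Qed.

Definition letter_inv (l : G1 + G2) : G1 + G2 :=
  match l with inl g => inl (ginv g) | inr g => inr (ginv g) end.

Definition word_inv (w : word) : word := rev (map letter_inv w).

Lemma letter_inv_act J1 J2 l u : admissible J1 J2 -> inU all0 (base_try J1 J2) u ->
  base_act [letter_inv l; l] u = u.
Proof.
  intros V Hu. destruct l as [g | g]; simpl.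
  - rewrite (j1_mul (admissible_reps1 V) (@base_inj1 J1 J2)), gmulVl by exact Hu.
    apply (j1_one (admissible_reps1 V) (@base_inj1 J1 J2)), Hu.
  - rewrite (j2_mul (admissible_reps2 V) (@base_inj2 J1 J2)), gmulVl by exact Hu.
    apply (j2_one (admissible_reps2 V) (@base_inj2 J1 J2)), Hu.
Qed.

Lemma word_inv_equiv w : word_equiv (word_inv w ++ w) [].
Proof.
  induction w as [| l w IH]; intros J1 J2 V u Hu; [reflexivity |].
  unfold word_inv. simpl. fold (word_inv w).
  replace ((word_inv w ++ [letter_inv l]) ++ l :: w)
    with (word_inv w ++ [letter_inv l; l] ++ w) by (rewrite <- app_assoc; reflexivity).
  rewrite !base_act_app, letter_inv_act by (try apply base_act_in; assumption).
  rewrite <- base_act_app. apply IH; assumption.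
Qed.

Local Notation Q := (quot word_equiv).
Local Notation cl := (cls word_equiv).

Definition amalgam_mul (p q : Q) : Q := cl (repr word_equiv p ++ repr word_equiv q).
Definition amalgam_one : Q := cl [].
Definition amalgam_inv (p : Q) : Q := cl (word_inv (repr word_equiv p)).

Lemma amalgam_mul_cls w w' : amalgam_mul (cl w) (cl w') = cl (w ++ w').
Proof. apply (cls_eq word_equiv), word_equiv_app; apply (repr_cls word_equiv). Qed.

Lemma amalgam_mulA p q r :
  amalgam_mul p (amalgam_mul q r) = amalgam_mul (amalgam_mul p q) r.
Proof.
  rewrite <- (cls_repr word_equiv p), <- (cls_repr word_equiv q), <- (cls_repr word_equiv r).
  rewrite !amalgam_mul_cls, app_assoc. reflexivity.
Qed.

Lemma amalgam_mul1l p : amalgam_mul amalgam_one p = p.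
Proof. rewrite <- (cls_repr word_equiv p). apply amalgam_mul_cls. Qed.

Lemma amalgam_mulVl p : amalgam_mul (amalgam_inv p) p = amalgam_one.
Proof.
  rewrite <- (cls_repr word_equiv p) at 2. unfold amalgam_inv.
  rewrite amalgam_mul_cls. apply (cls_eq word_equiv), word_inv_equiv.
Qed.

Definition amalgam : group :=
  @Group Q amalgam_mul amalgam_one amalgam_inv amalgam_mulA amalgam_mul1l amalgam_mulVl.

Definition amalgam_in1 (g : G1) : amalgam := cl [inl g].
Definition amalgam_in2 (g : G2) : amalgam := cl [inr g].
Definition amalgam_in0 (g : G0) : amalgam := amalgam_in1 (i1 g).

Lemma base_point_in J1 J2 : admissible J1 J2 ->
  inU all0 (base_try J1 J2) (gone, gone, gone).
Proof. intros [_ [_ [O1 O2]]]. repeat split; assumption. Qed.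

Lemma amalgam_in1_hom : group_hom amalgam_in1.
Proof.
  intros g h. change (cl [inl (g ** h)] = amalgam_mul (cl [inl g]) (cl [inl h])).
  rewrite amalgam_mul_cls. apply (cls_eq word_equiv). intros J1 J2 V u Hu. simpl.
  symmetry. apply (j1_mul (admissible_reps1 V) (@base_inj1 J1 J2)), Hu.
Qed.

Lemma amalgam_in2_hom : group_hom amalgam_in2.
Proof.
  intros g h. change (cl [inr (g ** h)] = amalgam_mul (cl [inr g]) (cl [inr h])).
  rewrite amalgam_mul_cls. apply (cls_eq word_equiv). intros J1 J2 V u Hu. simpl.
  symmetry. apply (j2_mul (admissible_reps2 V) (@base_inj2 J1 J2)), Hu.
Qed.

Lemma amalgam_in0_hom : group_hom amalgam_in0.
Proof. intros g h. unfold amalgam_in0. rewrite Hi1. apply amalgam_in1_hom. Qed.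

Lemma amalgam_in1_inj g h : amalgam_in1 g = amalgam_in1 h -> g = h.
Proof.
  intro E. apply (cls_inj word_equiv) in E.
  destruct admissible_exist as [J1 [J2 V]].
  pose proof (base_point_in V) as Hu. set (u := (gone, gone, gone)) in Hu.
  specialize (E J1 J2 V u Hu). simpl in E.
  destruct (j1_spec (admissible_reps1 V) g Hu) as [_ [_ Pg]].
  destruct (j1_spec (admissible_reps1 V) h Hu) as [_ [_ Ph]].
  rewrite E, Ph in Pg. symmetry. exact (gmul_cancel_l Pg).
Qed.

Lemma amalgam_in2_inj g h : amalgam_in2 g = amalgam_in2 h -> g = h.
Proof.
  intro E. apply (cls_inj word_equiv) in E.
  destruct admissible_exist as [J1 [J2 V]].
  pose proof (base_point_in V) as Hu. set (u := (gone, gone, gone)) in Hu.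
  specialize (E J1 J2 V u Hu). simpl in E.
  destruct (j2_spec (admissible_reps2 V) g Hu) as [_ [_ Pg]].
  destruct (j2_spec (admissible_reps2 V) h Hu) as [_ [_ Ph]].
  rewrite E, Ph in Pg. symmetry. exact (gmul_cancel_l Pg).
Qed.

Lemma amalgam_in0_inj g h : amalgam_in0 g = amalgam_in0 h -> g = h.
Proof. intro E. apply Ii1, amalgam_in1_inj, E. Qed.

(* Both letters move [(g0, g1, g2)] to [(g0 g, g1, g2)]. *)
Lemma amalgam_in2_i2 g : amalgam_in2 (i2 g) = amalgam_in0 g.
Proof.
  apply (cls_eq word_equiv). intros J1 J2 V [[p t1] t2] Hu. simpl.
  assert (Hv : inU all0 (base_try J1 J2) (p ** g, t1, t2)) by apply Hu.
  transitivity (p ** g, t1, t2).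
  - apply (j2_char (admissible_reps2 V) (@base_inj2 J1 J2)); auto.
    unfold pos2. simpl. rewrite Hi2. apply gmulA.
  - symmetry. apply (j1_char (admissible_reps1 V) (@base_inj1 J1 J2)); auto.
    unfold pos1. simpl. rewrite Hi1. apply gmulA.
Qed.

Definition amalgam_sub0 : amalgam -> Prop := image_of all0 amalgam_in0.
Definition amalgam_sub1 : amalgam -> Prop := image_of (fun _ => True) amalgam_in1.
Definition amalgam_sub2 : amalgam -> Prop := image_of (fun _ => True) amalgam_in2.

Lemma amalgam_generated (a : amalgam) :
  generated (fun y => amalgam_sub1 y \/ amalgam_sub2 y) a.
Proof.
  rewrite <- (cls_repr word_equiv a). induction (repr word_equiv a) as [| l w IH].
  - exact (gen_one _).
  - replace (cl (l :: w)) with (amalgam_mul (cl [l]) (cl w)) by apply amalgam_mul_cls.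
    apply (@gen_mul amalgam); [apply gen_base | exact IH].
    destruct l as [g | g]; [left | right]; exists g; split; auto.
Qed.

Section Transfer.
Variable x : try amalgam.
Hypothesis Hx : is_try amalgam_sub0 amalgam_sub1 amalgam_sub2 x.

Lemma te1_hom_on : hom_on amalgam_sub1 (te1 x). Proof. apply Hx. Qed.
Lemma te2_hom_on : hom_on amalgam_sub2 (te2 x). Proof. apply Hx. Qed.
Lemma te1_inj_on : inj_on amalgam_sub1 (te1 x). Proof. apply Hx. Qed.
Lemma te2_inj_on : inj_on amalgam_sub2 (te2 x). Proof. apply Hx. Qed.

Definition lift1 (g : G1) : tX1 x := te1 x (amalgam_in1 g).
Definition lift2 (g : G2) : tX2 x := te2 x (amalgam_in2 g).

Lemma lift1_hom : group_hom lift1.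
Proof.
  intros g h. unfold lift1. rewrite amalgam_in1_hom.
  apply te1_hom_on; [exists g | exists h]; auto.
Qed.

Lemma lift2_hom : group_hom lift2.
Proof.
  intros g h. unfold lift2. rewrite amalgam_in2_hom.
  apply te2_hom_on; [exists g | exists h]; auto.
Qed.

Lemma lift1_inj g h : lift1 g = lift1 h -> g = h.
Proof. intro E. apply amalgam_in1_inj, te1_inj_on; [exists g | exists h | ]; auto. Qed.

Lemma lift2_inj g h : lift2 g = lift2 h -> g = h.
Proof. intro E. apply amalgam_in2_inj, te2_inj_on; [exists g | exists h | ]; auto. Qed.

Lemma te2_in0 p : te2 x (amalgam_in0 p) = lift2 (i2 p).
Proof. unfold lift2. rewrite amalgam_in2_i2. reflexivity. Qed.

Lemma try_reps1 : coset_reps (image_of amalgam_sub0 (te1 x)) (tI1 x).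
Proof. apply Hx. Qed.

Lemma try_reps2 : coset_reps (image_of amalgam_sub0 (te2 x)) (tI2 x).
Proof. apply Hx. Qed.

Lemma try_inj1 : inj_on amalgam_sub0 (te1 x).
Proof.
  intros a b [p [_ ->]] [q [_ ->]]. apply te1_inj_on; [exists (i1 p) | exists (i1 q)]; auto.
Qed.

Lemma try_inj2 : inj_on amalgam_sub0 (te2 x).
Proof.
  intros a b [p [_ ->]] [q [_ ->]].
  apply te2_inj_on; [exists (i2 p) | exists (i2 q)];
    split; auto; symmetry; apply amalgam_in2_i2.
Qed.

Section Embedding.
Variables (a1 : tX1 x) (a2 : tX2 x) (J1 : G1 -> Prop) (J2 : G2 -> Prop).
Hypothesis V : admissible J1 J2.
Hypothesis HJ1 : forall t, J1 t <-> tI1 x (a1 ** lift1 t).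
Hypothesis HJ2 : forall t, J2 t <-> tI2 x (a2 ** lift2 t).

(* With [J_l = {t | a_l t ∈ I_{x,l}}], this copies [base_try J1 J2] onto the orbit of
   [(h, a1, a2)] in [U_x], intertwining the actions. *)
Definition embed (v : tU (base_try J1 J2)) : tU x :=
  (amalgam_in0 (fst (fst v)), a1 ** lift1 (snd (fst v)), a2 ** lift2 (snd v)).

Lemma embed_in v : inU all0 (base_try J1 J2) v -> inU amalgam_sub0 x (embed v).
Proof.
  intros [_ [V1 V2]]. split; [| split].
  - exists (fst (fst v)). auto.
  - apply HJ1, V1.
  - apply HJ2, V2.
Qed.

Lemma pos1_embed v : pos1 (embed v) = a1 ** lift1 (pos1 v).
Proof. unfold pos1, embed. simpl. rewrite lift1_hom, gmulA. reflexivity. Qed.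

Lemma pos2_embed v : pos2 (embed v) = a2 ** lift2 (pos2 v).
Proof. unfold pos2, embed. simpl. rewrite te2_in0, lift2_hom, gmulA. reflexivity. Qed.

Lemma embed_j1 g v : inU all0 (base_try J1 J2) v ->
  embed (j1 all0 (base_try J1 J2) g v) = j1 amalgam_sub0 x (lift1 g) (embed v).
Proof.
  intro Hv. destruct (j1_spec (admissible_reps1 V) g Hv) as [Hw [Ew Pw]].
  symmetry. apply (j1_char try_reps1 try_inj1); try apply embed_in; auto.
  - unfold embed. simpl. do 2 f_equal. exact Ew.
  - rewrite !pos1_embed, Pw, lift1_hom, gmulA. reflexivity.
Qed.

Lemma embed_j2 g v : inU all0 (base_try J1 J2) v ->
  embed (j2 all0 (base_try J1 J2) g v) = j2 amalgam_sub0 x (lift2 g) (embed v).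
Proof.
  intro Hv. destruct (j2_spec (admissible_reps2 V) g Hv) as [Hw [Ew Pw]].
  symmetry. apply (j2_char try_reps2 try_inj2); try apply embed_in; auto.
  - unfold embed. simpl. do 2 f_equal. exact Ew.
  - rewrite !pos2_embed, Pw, lift2_hom, gmulA. reflexivity.
Qed.

Lemma embed_word_act w v : inU all0 (base_try J1 J2) v ->
  embed (base_act w v) = word_act amalgam_sub0 lift1 lift2 w (embed v).
Proof.
  revert v. induction w as [| [g | g] w IH]; intros v Hv; [reflexivity | |]; simpl.
  - rewrite <- embed_j1 by exact Hv.
    apply IH, (j1_spec (admissible_reps1 V)), Hv.
  - rewrite <- embed_j2 by exact Hv.
    apply IH, (j2_spec (admissible_reps2 V)), Hv.
Qed.

Lemma embed_inj v v' : embed v = embed v' -> v = v'.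
Proof.
  destruct v as [[p t1] t2], v' as [[p' t1'] t2']. unfold embed. simpl.
  intro E.
  assert (E0 : amalgam_in0 p = amalgam_in0 p') by exact (f_equal (fun u => fst (fst u)) E).
  assert (E1 : a1 ** lift1 t1 = a1 ** lift1 t1') by exact (f_equal (fun u => snd (fst u)) E).
  assert (E2 : a2 ** lift2 t2 = a2 ** lift2 t2') by exact (f_equal snd E).
  apply amalgam_in0_inj in E0. apply gmul_cancel_l, lift1_inj in E1.
  apply gmul_cancel_l, lift2_inj in E2. subst. reflexivity.
Qed.
End Embedding.

Lemma orbit_reps_admissible a1 a2 : tI1 x a1 -> tI2 x a2 ->
  admissible (fun t => tI1 x (a1 ** lift1 t)) (fun t => tI2 x (a2 ** lift2 t)).
Proof.
  intros U1 U2. split; [| split; [| split]].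
  - apply (coset_reps_pullback a1 lift1_hom lift1_inj).
    apply (coset_reps_ext (K := image_of amalgam_sub0 (te1 x))); [| exact try_reps1].
    intro y. unfold amalgam_sub0. rewrite !image_of_comp. reflexivity.
  - apply (coset_reps_pullback a2 lift2_hom lift2_inj).
    apply (coset_reps_ext (K := image_of amalgam_sub0 (te2 x))); [| exact try_reps2].
    intro y. unfold amalgam_sub0. rewrite !image_of_comp.
    apply image_of_ext. intros q _. apply te2_in0.
  - rewrite (group_hom_one lift1_hom), gmul1r. exact U1.
  - rewrite (group_hom_one lift2_hom), gmul1r. exact U2.
Qed.

Lemma word_act_equiv w w' u : word_equiv w w' -> inU amalgam_sub0 x u ->
  word_act amalgam_sub0 lift1 lift2 w u = word_act amalgam_sub0 lift1 lift2 w' u.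
Proof.
  intros E [[p [_ Ep]] [U1 U2]]. destruct u as [[h a1] a2]. simpl in *. subst h.
  set (J1 := fun t => tI1 x (a1 ** lift1 t)). set (J2 := fun t => tI2 x (a2 ** lift2 t)).
  assert (V : admissible J1 J2) by exact (orbit_reps_admissible U1 U2).
  set (v := (p, gone, gone) : tU (base_try J1 J2)).
  assert (Hv : inU all0 (base_try J1 J2) v)
    by (destruct V as [_ [_ [O1 O2]]]; repeat split; assumption).
  assert (Ev : embed a1 a2 v = (amalgam_in0 p, a1, a2)).
  { unfold embed. simpl.
    rewrite (group_hom_one lift1_hom), (group_hom_one lift2_hom), !gmul1r. reflexivity. }
  assert (Act : forall w0, word_act amalgam_sub0 lift1 lift2 w0 (amalgam_in0 p, a1, a2) =
    embed a1 a2 (base_act w0 v)).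
  { intro w0. rewrite (embed_word_act V (fun _ => iff_refl _) (fun _ => iff_refl _))
      by exact Hv. rewrite Ev. reflexivity. }
  rewrite !Act. f_equal. apply E; assumption.
Qed.
End Transfer.

Definition amalgam_act (x : try amalgam) (a : amalgam) (u : tU x) : tU x :=
  word_act amalgam_sub0 (@lift1 x) (@lift2 x) (repr word_equiv a) u.

Lemma amalgam_act_hom (x : try amalgam) :
  is_try amalgam_sub0 amalgam_sub1 amalgam_sub2 x ->
  amalg_hom amalgam_sub0 amalgam_sub1 amalgam_sub2 x (@amalgam_act x).
Proof.
  intro Hx. unfold amalgam_act. split; [| split; [| split]].
  - intro a. apply word_act_perm.
  - intros a b u Hu. rewrite <- word_act_app. apply (word_act_equiv Hx); [| exact Hu].
    apply (repr_cls word_equiv).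
  - intros a u [g [_ ->]] Hu. apply (word_act_equiv Hx (w' := [inl g])); [| exact Hu].
    apply (repr_cls word_equiv).
  - intros a u [g [_ ->]] Hu. apply (word_act_equiv Hx (w' := [inr g])); [| exact Hu].
    apply (repr_cls word_equiv).
Qed.

Hypothesis F0 : finite_group G0.
Hypothesis F1 : finite_group G1.
Hypothesis F2 : finite_group G2.

(* The tries that separate the points of the amalgam. *)
Definition factor_try (J1 : G1 -> Prop) (J2 : G2 -> Prop) : try amalgam :=
  @Try amalgam G1 G2 (inverse_of gone amalgam_in1) (inverse_of gone amalgam_in2) J1 J2.

Lemma factor_try_lift1 J1 J2 t : @lift1 (factor_try J1 J2) t = t.
Proof. apply inverse_of_K, amalgam_in1_inj. Qed.

Lemma factor_try_lift2 J1 J2 t : @lift2 (factor_try J1 J2) t = t.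
Proof. apply inverse_of_K, amalgam_in2_inj. Qed.

Lemma factor_try_is_try J1 J2 : admissible J1 J2 ->
  is_try amalgam_sub0 amalgam_sub1 amalgam_sub2 (factor_try J1 J2).
Proof.
  intros [C1 [C2 [O1 O2]]].
  pose proof (factor_try_lift1 J1 J2) as L1. pose proof (factor_try_lift2 J1 J2) as L2.
  unfold lift1, lift2 in L1, L2. simpl in L1, L2.
  split; [| split; [| split; [| split; [| split; [| split; [| split; [| split; [| split]]]]]]]].
  - apply finite_group_locally_finite, F1.
  - apply finite_group_locally_finite, F2.
  - intros y z [g [_ ->]] [h [_ ->]]. simpl. rewrite <- amalgam_in1_hom, !L1. reflexivity.
  - intros y z [g [_ ->]] [h [_ ->]]. simpl. rewrite !L1. intros ->. reflexivity.
  - intros y z [g [_ ->]] [h [_ ->]]. simpl. rewrite <- amalgam_in2_hom, !L2. reflexivity.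
  - intros y z [g [_ ->]] [h [_ ->]]. simpl. rewrite !L2. intros ->. reflexivity.
  - change (coset_reps (image_of amalgam_sub0 (te1 (factor_try J1 J2))) J1).
    apply (coset_reps_ext (K := image_of all0 i1)); [| exact C1].
    intro y. unfold amalgam_sub0. rewrite image_of_comp.
    apply image_of_ext. intros p _. symmetry. apply L1.
  - change (coset_reps (image_of amalgam_sub0 (te2 (factor_try J1 J2))) J2).
    apply (coset_reps_ext (K := image_of all0 i2)); [| exact C2].
    intro y. unfold amalgam_sub0. rewrite image_of_comp.
    apply image_of_ext. intros p _. simpl. rewrite <- amalgam_in2_i2. symmetry. apply L2.
  - exact O1.
  - exact O2.
Qed.

Lemma amalgam_separates (a : amalgam) : a <> gone ->
  exists x : try amalgam, is_try amalgam_sub0 amalgam_sub1 amalgam_sub2 x /\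
    exists f, amalg_hom amalgam_sub0 amalgam_sub1 amalgam_sub2 x f /\
      exists u, inU amalgam_sub0 x u /\ f a u <> u.
Proof.
  intro Ha.
  assert (Moved : exists J1 J2, admissible J1 J2 /\ exists u,
    inU all0 (base_try J1 J2) u /\ base_act (repr word_equiv a) u <> u).
  { apply NNPP. intro N. apply Ha. rewrite <- (cls_repr word_equiv a).
    apply (cls_eq word_equiv). intros J1 J2 V u Hu. apply NNPP. intro Hne.
    apply N. exists J1, J2. split; [exact V |]. exists u. auto. }
  destruct Moved as [J1 [J2 [V [u [Hu Hne]]]]].
  pose proof (factor_try_is_try V) as Hx.
  assert (HJ1 : forall t,
    J1 t <-> tI1 (factor_try J1 J2) (gone ** lift1 (factor_try J1 J2) t))
    by (intro t; rewrite factor_try_lift1, gmul1l; reflexivity).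
  assert (HJ2 : forall t,
    J2 t <-> tI2 (factor_try J1 J2) (gone ** lift2 (factor_try J1 J2) t))
    by (intro t; rewrite factor_try_lift2, gmul1l; reflexivity).
  exists (factor_try J1 J2). split; [exact Hx |].
  exists (@amalgam_act (factor_try J1 J2)). split; [apply amalgam_act_hom, Hx |].
  exists (embed gone gone u). split; [apply embed_in; assumption |].
  unfold amalgam_act. rewrite <- (embed_word_act Hx V HJ1 HJ2) by exact Hu.
  intro E. apply Hne, (embed_inj Hx E).
Qed.

Lemma amalgam_finite : finite_group amalgam.
Proof.
  destruct F0 as [l0 L0], F1 as [l1 L1], F2 as [l2 L2].
  set (points := list_prod (list_prod l0 l1) l2).
  set (keys := list_prod (list_prod (sublists l1) (sublists l2)) points).
  set (code := fun a : amalgam => map (fun k : list G1 * list G2 * (G0 * G1 * G2) =>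
    @base_act (fun t => In t (fst (fst k))) (fun t => In t (snd (fst k)))
      (repr word_equiv a) (snd k) : G0 * G1 * G2) keys).
  apply (@finite_of_injection amalgam _ gone code
    (fun s => length s = length keys /\ incl s points)); [| | apply finite_lists].
  - intro a. split; [apply length_map |].
    intros [[p t1] t2] _. apply in_prod; [apply in_prod |]; auto.
  - intros a b E. rewrite <- (cls_repr word_equiv a), <- (cls_repr word_equiv b).
    apply (cls_eq word_equiv). intros J1 J2 V u Hu.
    destruct (pred_as_sublist J1 (fun t => L1 t I)) as [s1 [S1 ->]].
    destruct (pred_as_sublist J2 (fun t => L2 t I)) as [s2 [S2 ->]].
    apply (proj1 map_ext_in_iff E (s1, s2, u)).
    apply in_prod; [apply in_prod; assumption |].
    destruct u as [[p t1] t2]. apply in_prod; [apply in_prod |]; auto.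
Qed.

Lemma amalgam_NF_fin : NF_fin amalgam_sub0 amalgam_sub1 amalgam_sub2.
Proof.
  assert (S : forall G : group, is_subgroup (fun _ : G => True)) by (repeat split).
  split; [apply image_subgroup; [apply S | apply amalgam_in0_hom] |].
  split; [apply image_subgroup; [apply S | apply amalgam_in1_hom] |].
  split; [apply image_subgroup; [apply S | apply amalgam_in2_hom] |].
  split; [apply finite_image, F0 |].
  split; [apply finite_image, F1 |].
  split; [apply finite_image, F2 |].
  split; [apply finite_group_locally_finite, amalgam_finite |].
  split; [intros a [p [_ ->]]; exists (i1 p); auto |].
  split; [intros a [p [_ ->]]; exists (i2 p); split; [exact I | symmetry; apply amalgam_in2_i2] |].
  split; [apply amalgam_generated |].
  split; [intros x Hx; exists (@amalgam_act x); apply amalgam_act_hom, Hx |].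
  apply amalgam_separates.
Qed.

End Amalgam.

Theorem claim2p8 :
  (forall (G3 : group) (G0 G1 G2 : G3 -> Prop),
     NF_fin G0 G1 G2 ->
     forall x : try G3, is_try G0 G1 G2 x ->
     forall f f' : G3 -> tU x -> tU x,
       amalg_hom G0 G1 G2 x f -> amalg_hom G0 G1 G2 x f' ->
       forall a u, inU G0 x u -> f a u = f' a u) /\
  (forall (G3 : group) (G0 G1 G2 : G3 -> Prop),
     NF_fin G0 G1 G2 -> forall a, (G1 a /\ G2 a) <-> G0 a) /\
  (forall (G0 G1 G2 : group) (i1 : G0 -> G1) (i2 : G0 -> G2),
     finite_group G0 -> finite_group G1 -> finite_group G2 ->
     group_hom i1 -> (forall a b, i1 a = i1 b -> a = b) ->
     group_hom i2 -> (forall a b, i2 a = i2 b -> a = b) ->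
     exists (H3 : group) (H0 H1 H2 : H3 -> Prop)
            (f0 : G0 -> H3) (f1 : G1 -> H3) (f2 : G2 -> H3),
       NF_fin H0 H1 H2 /\
       iso_onto f0 H0 /\ iso_onto f1 H1 /\ iso_onto f2 H2 /\
       (forall g, f1 (i1 g) = f0 g) /\ (forall g, f2 (i2 g) = f0 g)).
Proof.
  split; [| split].
  - intros G3 G0 G1 G2 [_ [S1 [_ [_ [_ [_ [_ [G01 [_ [Gen _]]]]]]]]]] x Hx f f'.
    apply amalg_hom_unique; assumption.
  - intros G3 G0 G1 G2 HN a. pose proof HN as [_ [_ [_ [_ [_ [_ [_ [G01 [G02 _]]]]]]]]].
    split; [intros [A1 A2]; apply (NF_fin_inter HN); assumption | auto].
  - intros G0 G1 G2 i1 i2 F0 F1 F2 Hi1 Ii1 Hi2 Ii2.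
    exists (amalgam Ii1 Ii2), (amalgam_sub0 (Ii1 := Ii1) (Ii2 := Ii2)),
      (amalgam_sub1 (Ii1 := Ii1) (Ii2 := Ii2)), (amalgam_sub2 (Ii1 := Ii1) (Ii2 := Ii2)),
      (amalgam_in0 Ii1 Ii2), (amalgam_in1 Ii1 Ii2), (amalgam_in2 Ii1 Ii2).
    split; [apply amalgam_NF_fin; assumption |].
    split; [apply iso_onto_image; [apply amalgam_in0_hom | apply amalgam_in0_inj]; assumption |].
    split; [apply iso_onto_image; [apply amalgam_in1_hom | apply amalgam_in1_inj]; assumption |].
    split; [apply iso_onto_image; [apply amalgam_in2_hom | apply amalgam_in2_inj]; assumption |].
    split; [reflexivity | apply amalgam_in2_i2; assumption].
Qed.
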